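(* Let $B\in\mathbb{Z}^{n\times n}$ and $b\in\mathbb{Z}^n$. Define a relation on $\mathbb{Z}^n$ by $x\sim y$ if and only if there exists $z\in\mathbb{Z}^n$ with $x-y=Bz$ or $x+y+b=Bz$. Then $\sim$ is an equivalence relation and its number of equivalence classes is $$E(B,b)=\frac{|\det(B)|_\infty+O(B,b)}{2}.$$
   Context: $O(B,b)$ denotes the number of solutions $\bar x\in\mathbb{Z}_2^n$ of the linear system $\bar B\bar x=\bar b$ over $\mathbb{Z}_2=\mathbb{Z}/2\mathbb{Z}$, where the bar denotes reduction modulo $2$. For an integer $x$, $|x|_\infty=|x|$ if $x\neq 0$ and $|x|_\infty=\infty$ if $x=0$; arithmetic with $\infty$ follows $(\infty+k)/2=\infty$. *)

From mathcomp Require Import all_boot all_order all_algebra.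
Set Implicit Arguments. Unset Strict Implicit. Unset Printing Implicit Defensive.
Import Order.TTheory GRing.Theory Num.Theory.
Local Open Scope ring_scope.

Definition simB (n : nat) (B : 'M[int]_n) (b : 'cV[int]_n) (x y : 'cV[int]_n) : Prop :=
  exists z : 'cV[int]_n, x - y = B *m z \/ x + y + b = B *m z.

Definition is_equivalence (T : Type) (R : T -> T -> Prop) : Prop :=
  (forall x, R x x) /\ (forall x y, R x y -> R y x) /\
  (forall x y z, R x y -> R y z -> R x z).

Definition has_nclasses (T : Type) (R : T -> T -> Prop) (k : nat) : Prop :=
  exists f : T -> 'I_k, (forall i, exists x, f x = i) /\ (forall x y, R x y <-> f x = f y).

Definition has_infinitely_many_classes (T : Type) (R : T -> T -> Prop) : Prop :=
  forall N : nat, exists g : 'I_N -> T, forall i j, R (g i) (g j) -> i = j.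

Definition mod2mx (m n : nat) (A : 'M[int]_(m, n)) : 'M['F_2]_(m, n) :=
  map_mx (fun a : int => a%:~R) A.

Definition O2 (n : nat) (B : 'M[int]_n) (b : 'cV[int]_n) : nat :=
  #|[set x : 'cV['F_2]_n | mod2mx B *m x == mod2mx b]|.

From mathcomp Require Import all_boot all_order all_algebra zify ring.
Import Order.TTheory GRing.Theory Num.Theory.
Set Implicit Arguments. Unset Strict Implicit. Unset Printing Implicit Defensive.

(* By the Smith normal form, B = L D R with L, R unimodular and D = diag(delta).
   In the coordinates u = L^-1 x, v = L^-1 y and beta = L^-1 b, x ~ y means
   that delta_i | u_i - v_i for all i, or delta_i | u_i + v_i + beta_i for all i.
   If det B <> 0, the classes are therefore the orbits of the involution
   u |-> -u - beta on prod_i Z/delta_i, a set of |det B| elements, and an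
   involution on a finite set has (#elements + #fixed points)/2 orbits.  The
   fixed points, 2 u_i + beta_i = 0 mod delta_i, are equinumerous coordinatewise
   with the solutions of delta_i e_i = beta_i in Z_2, whose number is O(B,b).
   If det B = 0, some delta_i vanishes and the i-th coordinate of L^-1 x alone
   separates infinitely many classes. *)

Lemma has_nclasses_repr (T : Type) (F : finType) (R : T -> T -> Prop)
    (C : {set F}) (c : T -> F) :
  (forall x, c x \in C) -> (forall u, u \in C -> exists x, c x = u) ->
  (forall x y, R x y <-> c x = c y) -> has_nclasses R #|C|.
Proof.
move=> cC c_onto Rc; exists (fun x => enum_rank_in (cC x) (c x)); split.
  move=> i; have [x cx] := c_onto _ (enum_valP i).
  by exists x; rewrite (eq_enum_rank_in (cC x) (enum_valP i)) ?cC // cx enum_valK_in.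
move=> x y; rewrite Rc; split => [cxy|]; last exact: enum_rank_in_inj.
by rewrite (eq_enum_rank_in (cC x) (cC y)) ?cC // cxy.
Qed.

Lemma has_nclasses_involution (T : Type) (F : finType) (R : T -> T -> Prop)
    (p : T -> F) (s : F -> F) :
  (forall u, exists x, p x = u) -> involutive s ->
  (forall x y, R x y <-> p x = p y \/ p x = s (p y)) ->
  exists k, has_nclasses R k /\ (2 * k = #|F| + #|[set u | s u == u]|)%N.
Proof.
move=> p_onto sK Rp.
(* [C] keeps the element of smaller rank in each orbit {u, s u}, so [C] and
   its preimage under [s] cover [F] and meet exactly in the fixed points. *)
pose r := @enum_rank F; pose C := [set u | r u <= r (s u)].
pose c u := if r u <= r (s u) then u else s u.
have cC u : c u \in C.
  by rewrite /c inE; case: ifP => // /negbT; rewrite -ltnNge sK => /ltnW.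
have c_eq u v : c u = c v <-> u = v \/ u = s v.
  split=> [|[->|->]] //.
    rewrite /c; case: ifP => _; case: ifP => _ e; [left|right|right|left] => //.
      by rewrite -e sK.
    by rewrite -(sK u) e sK.
  rewrite /c sK; case: ifP => h1; case: ifP => h2 //; apply: enum_rank_inj.
    by apply/ord_inj/eqP; rewrite eqn_leq h1 h2.
  by move: h1 h2; rewrite leqNgt => /negbFE /ltnW ->.
exists #|C|; split.
  apply: (has_nclasses_repr (c := c \o p)) => [x|u uC|x y]; [exact: cC| |].
    have [x px] := p_onto u; exists x; rewrite /= px /c.
    by move: uC; rewrite inE => ->.
  by rewrite Rp /= c_eq.
have CsC : C :|: s @^-1: C = setT.
  by apply/setP => u; rewrite !inE sK leq_total.
have CIsC : C :&: s @^-1: C = [set u | s u == u].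
  apply/setP => u; rewrite !inE sK -eqn_leq.
  by rewrite (inj_eq val_inj) (inj_eq enum_rank_inj) eq_sym.
by rewrite mul2n -addnn -{2}(card_preimset C (can_inj sK)) -cardsUI CsC CIsC cardsT.
Qed.

Local Open Scope ring_scope.

Lemma has_infinitely_many_classes_invariant (T : Type) (R : T -> T -> Prop)
    (phi : T -> int) (beta : int) :
  (forall m, exists x, phi x = m) ->
  (forall x y, R x y -> phi x = phi y \/ phi x + phi y + beta = 0) ->
  has_infinitely_many_classes R.
Proof.
move=> phi_onto Rphi N.
(* Above [`|beta|] the sum [phi x + phi y + beta] is positive. *)
have [g phi_g] := fin_all_exists (fun j : 'I_N => phi_onto ((`|beta| + j)%:Z + 1)).
have := lez_abs (- beta); rewrite abszN => beta_ge.
by exists g => i j /Rphi; rewrite !phi_g => -[] e; apply: ord_inj; lia.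
Qed.

Lemma card_dffun_forall (I : finType) (K : I -> finType) (P : forall i, pred (K i)) :
  #|[set u : {dffun forall i, K i} | [forall i, P i (u i)]]| =
  (\prod_i #|[set k | P i k]|)%N.
Proof.
pose fam : simpl_pred {dffun forall i, K i} := family (fun i => [set k | P i k]).
rewrite (eq_card (B := fam)).
  by rewrite card_family /image_mem foldrE big_map enumT.
by move=> u; rewrite inE; apply/forallP/familyP => uP i; move: (uP i); rewrite inE.
Qed.

Lemma card_cV_forall (K : finType) n (P : 'I_n -> pred K) :
  #|[set w : 'cV[K]_n | [forall i, P i (w i 0)]]| = (\prod_i #|[set k | P i k]|)%N.
Proof.
rewrite -(card_dffun_forall (K := fun _ => K)).
have col_inj : injective (fun u : {dffun forall i : 'I_n, K} => \col_i u i).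
  by move=> u v /matrixP uv; apply/ffunP => i; move: (uv i 0); rewrite !mxE.
rewrite -(card_imset _ col_inj); apply: eq_card => w; rewrite inE.
apply/idP/imsetP => [wP|[u + ->]].
  exists [ffun i => w i 0].
    by rewrite inE; apply/forallP => i; rewrite ffunE (forallP wP).
  by apply/matrixP => i j; rewrite !mxE ffunE (ord1 j).
by rewrite inE => /forallP uP; apply/forallP => i; rewrite mxE.
Qed.

Lemma eq_F2_intr (m m' : int) : (m%:~R == m'%:~R :> 'F_2) = (2 %| m - m')%Z.
Proof. by rewrite -subr_eq0 -mulrzBr (dvdz_pcharf (pchar_Fp (isT : prime 2))). Qed.

Section Residue.

Variable d : int.
Hypothesis d_neq0 : d != 0.

Lemma absz_modz_lt (m : int) : (`|(m %% d)%Z|%N < `|d|)%N.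
Proof. by rewrite -ltz_nat gez0_abs ?modz_ge0 ?ltz_mod. Qed.

Definition zres (m : int) : 'I_`|d| := Ordinal (absz_modz_lt m).

Lemma zresE (m : int) : (zres m : nat)%:Z = (m %% d)%Z.
Proof. by rewrite /= gez0_abs ?modz_ge0. Qed.

Lemma zres_eq (m m' : int) : (zres m == zres m') = (d %| m - m')%Z.
Proof. by rewrite -eqz_mod_dvd -val_eqE -eqz_nat !zresE. Qed.

Lemma zres_dvd (m : int) : (d %| (zres m : nat)%:Z - m)%Z.
Proof. by rewrite -zres_eq; apply/eqP/ord_inj; rewrite /= zresE modz_mod. Qed.

Lemma zres_ord (k : 'I_`|d|) : zres k = k.
Proof.
by apply/ord_inj/eqP; rewrite -eqz_nat zresE -modz_abs modz_small ?ltz_nat ?ltn_ord.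
Qed.

Definition zrefl (beta : int) (k : 'I_`|d|) : 'I_`|d| := zres (- (k : nat)%:Z - beta).

Lemma zres_refl_eq (beta m m' : int) :
  (zres m == zrefl beta (zres m')) = (d %| m + m' + beta)%Z.
Proof.
rewrite zres_eq.
have -> : m - (- (zres m' : nat)%:Z - beta) =
          ((zres m' : nat)%:Z - m') + (m + m' + beta) by ring.
by rewrite rpredDl ?zres_dvd.
Qed.

Lemma zreflK (beta : int) : involutive (zrefl beta).
Proof.
move=> k; apply/eqP; rewrite eq_sym -{1}(zres_ord k) [zrefl beta k]/zrefl zres_refl_eq.
by rewrite (_ : _ + _ = 0) ?dvdz0 //; ring.
Qed.

Lemma zrefl_fixed (beta : int) (k : 'I_`|d|) :
  (zrefl beta k == k) = (d %| 2 * (k : nat)%:Z + beta)%Z.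
Proof.
rewrite -(zres_ord k) eq_sym zres_refl_eq zres_ord.
by congr (_ %| _)%Z; ring.
Qed.

Lemma card_zrefl_fixed (beta : int) :
  #|[set k | zrefl beta k == k]| = #|[set e : 'F_2 | d%:~R * e == beta%:~R]|.
Proof.
(* [k |-> (2 k + beta) / d mod 2] maps the fixed points onto the solutions. *)
pose q (k : 'I_`|d|) := ((2 * (k : nat)%:Z + beta) %/ d)%Z.
have qK k : zrefl beta k == k -> d * q k = 2 * (k : nat)%:Z + beta.
  by rewrite zrefl_fixed => /divzK; rewrite mulrC.
have q_inj : {in [set k | zrefl beta k == k] &, injective (fun k => (q k)%:~R : 'F_2)}.
  move=> k k'; rewrite !inE => /qK kq /qK k'q /eqP; rewrite eq_F2_intr => /dvdzP [t qt].
  apply/eqP; rewrite -(zres_ord k) -(zres_ord k') zres_eq; apply/dvdzP; exists t.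
  have kk' : 2 * ((k : nat)%:Z - (k' : nat)%:Z) = d * (q k - q k').
    by rewrite [RHS]mulrBr kq k'q; ring.
  by apply: (@mulfI _ 2) => //; rewrite kk' qt; ring.
rewrite -(card_in_imset q_inj); apply: eq_card => e; rewrite inE.
apply/imsetP/idP => [[k] | B_e].
  rewrite inE => /qK kq ->; rewrite -intrM kq eq_F2_intr.
  by apply/dvdzP; exists (k : nat)%:Z; ring.
pose e' : int := (e : nat)%:Z.
have e_lift : e = e'%:~R by rewrite -pmulrn natr_Zp.
move: B_e; rewrite e_lift -intrM eq_F2_intr => /dvdzP [t te].
have key : 2 * (zres t : nat)%:Z + beta = d * (e' - 2 * (t %/ d)%Z).
  rewrite zresE; move: (divz_eq t d) te; lia.
exists (zres t); first by rewrite inE zrefl_fixed key dvdz_mulr.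
rewrite /q key mulKz //; apply/eqP; rewrite eq_F2_intr.
by apply/dvdzP; exists (t %/ d)%Z; ring.
Qed.

End Residue.

Lemma simB_equiv n (B : 'M[int]_n) (b : 'cV[int]_n) : is_equivalence (simB B b).
Proof.
split; [|split].
- by move=> x; exists 0; left; rewrite subrr mulmx0.
- move=> x y [z [e|e]].
    by exists (- z); left; rewrite mulmxN -e opprB.
  by exists z; right; rewrite -e (addrC y).
- move=> x y w [z1 [e1|e1]] [z2 [e2|e2]].
  + by exists (z1 + z2); left; rewrite mulmxDr -e1 -e2 addrA subrK.
  + by exists (z1 + z2); right; rewrite mulmxDr -e1 -e2 !addrA subrK.
  + exists (z1 - z2); right; rewrite mulmxBr -e1 -e2.
    by rewrite opprB (addrC w) addrA (addrAC x y b) addrK addrAC.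
  + exists (z1 - z2); left; rewrite mulmxBr -e1 -e2.
    by rewrite (addrAC x y b) -(addrA y w b) addrKA (addrC w b) addrKA.
Qed.

Lemma diag_mx_range n (delta : 'I_n -> int) (w : 'cV[int]_n) :
  (exists z, w = diag_mx (\row_i delta i) *m z) <-> forall i, (delta i %| w i ord0)%Z.
Proof.
split=> [[z ->] i|dvd_w]; first by rewrite mul_diag_mx !mxE dvdz_mulr.
exists (\col_i (w i ord0 %/ delta i)%Z); apply/matrixP => i j.
by rewrite (ord1 j) mul_diag_mx !mxE mulrC divzK.
Qed.

Lemma simB_diag n (delta : 'I_n -> int) (beta x y : 'cV[int]_n) :
  simB (diag_mx (\row_i delta i)) beta x y <->
  (forall i, delta i %| x i ord0 - y i ord0)%Z \/
  (forall i, delta i %| x i ord0 + y i ord0 + beta i ord0)%Z.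
Proof.
split=> [[z [e|e]]|[dvd_xy|dvd_xyb]].
- by left=> i; move: ((diag_mx_range _ _).1 (ex_intro _ z e) i); rewrite !mxE.
- by right=> i; move: ((diag_mx_range _ _).1 (ex_intro _ z e) i); rewrite !mxE.
- have [z e] : exists z, x - y = diag_mx (\row_i delta i) *m z.
    by apply/diag_mx_range => i; rewrite !mxE.
  by exists z; left.
- have [z e] : exists z, x + y + beta = diag_mx (\row_i delta i) *m z.
    by apply/diag_mx_range => i; rewrite !mxE.
  by exists z; right.
Qed.

Lemma simB_unimodular n (L B R : 'M[int]_n) (b x y : 'cV[int]_n) :
  L \in unitmx -> R \in unitmx ->
  simB (L *m B *m R) (L *m b) (L *m x) (L *m y) <-> simB B b x y.
Proof.
move=> uL uR; have L_inj : injective (@mulmx _ n n 1 L) := can_inj (mulKmx uL).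
have LBRE z : L *m B *m R *m z = L *m (B *m (R *m z)) by rewrite !mulmxA.
rewrite /simB -!mulmxBr -!mulmxDr; split=> -[z]; rewrite ?LBRE.
- by case=> /L_inj e; exists (R *m z); [left|right].
- by case=> e; exists (invmx R *m z); rewrite LBRE mulKVmx // e; [left|right].
Qed.

Lemma mod2mx_unit n (A : 'M[int]_n) : A \in unitmx -> mod2mx A \in unitmx.
Proof. by rewrite !unitmxE /mod2mx det_map_mx; apply: rmorph_unit. Qed.

Lemma O2_unimodular n (L B R : 'M[int]_n) (b : 'cV[int]_n) :
  L \in unitmx -> R \in unitmx -> O2 (L *m B *m R) (L *m b) = O2 B b.
Proof.
move=> /mod2mx_unit uL /mod2mx_unit uR.
rewrite /O2 -[RHS](card_preimset _ (can_inj (mulKmx uR))); apply: eq_card => x.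
by rewrite !inE /mod2mx !map_mxM -/(mod2mx _) -!mulmxA (inj_eq (can_inj (mulKmx uL))).
Qed.

Lemma O2_diag n (delta : 'I_n -> int) (beta : 'cV[int]_n) :
  O2 (diag_mx (\row_i delta i)) beta =
  (\prod_i #|[set e : 'F_2 | ((delta i)%:~R * e == (beta i ord0)%:~R)%R]|)%N.
Proof.
rewrite /O2 -card_cV_forall; apply: eq_card => x.
rewrite !inE /mod2mx map_diag_mx mul_diag_mx.
apply/eqP/forallP => [/matrixP Dx i|Dx]; first by move: (Dx i ord0); rewrite !mxE => ->.
by apply/matrixP => i j; rewrite (ord1 j) !mxE; apply/eqP; exact: Dx.
Qed.

Section DiagonalResidues.

Variables (n : nat) (delta : 'I_n -> int).
Hypothesis delta_neq0 : forall i, delta i != 0.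

Definition res_cV (x : 'cV[int]_n) : {dffun forall i, 'I_`|delta i|} :=
  [ffun i => zres (delta_neq0 i) (x i ord0)].

Definition refl_cV (beta : 'cV[int]_n) (u : {dffun forall i, 'I_`|delta i|}) :
    {dffun forall i, 'I_`|delta i|} :=
  [ffun i => zrefl (delta_neq0 i) (beta i ord0) (u i)].

Lemma res_cV_onto u : exists x, res_cV x = u.
Proof.
by exists (\col_i (u i : nat)%:Z); apply/ffunP => i; rewrite ffunE mxE zres_ord.
Qed.

Lemma refl_cVK beta : involutive (refl_cV beta).
Proof. by move=> u; apply/ffunP => i; rewrite !ffunE zreflK. Qed.

Lemma res_cV_eq x y :
  res_cV x = res_cV y <-> forall i, (delta i %| x i ord0 - y i ord0)%Z.
Proof.
split=> [/ffunP xy i | xy]; first by move: (xy i); rewrite !ffunE => /eqP; rewrite zres_eq.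
by apply/ffunP => i; rewrite !ffunE; apply/eqP; rewrite zres_eq.
Qed.

Lemma res_cV_refl_eq beta x y :
  res_cV x = refl_cV beta (res_cV y) <->
  forall i, (delta i %| x i ord0 + y i ord0 + beta i ord0)%Z.
Proof.
split=> [/ffunP xy i | xy].
  by move: (xy i); rewrite !ffunE => /eqP; rewrite zres_refl_eq.
by apply/ffunP => i; rewrite !ffunE; apply/eqP; rewrite zres_refl_eq.
Qed.

Lemma card_res_cV : #|{: {dffun forall i, 'I_`|delta i|}}| = (\prod_i `|delta i|)%N.
Proof.
rewrite card_dep_ffun /image_mem foldrE big_map enumT.
by apply: eq_bigr => i _; rewrite card_ord.
Qed.

Lemma card_refl_cV_fixed beta :
  #|[set u | refl_cV beta u == u]| = O2 (diag_mx (\row_i delta i)) beta.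
Proof.
rewrite O2_diag -(eq_bigr _ (fun i _ => card_zrefl_fixed (delta_neq0 i) (beta i ord0))).
rewrite -card_dffun_forall; apply: eq_card => u; rewrite !inE.
apply/eqP/forallP => [/ffunP uK i | uK]; first by rewrite -{2}(uK i) ffunE.
by apply/ffunP => i; rewrite ffunE (eqP (uK i)).
Qed.

End DiagonalResidues.

Lemma int_Smith_diag n (B : 'M[int]_n) :
  exists L R (delta : 'I_n -> int),
    [/\ L \in unitmx, R \in unitmx & B = L *m diag_mx (\row_i delta i) *m R].
Proof.
have [L uL [R uR [d _ ->]]] := int_Smith_normal_form B.
exists L, R, (fun i => d`_i); split=> //; congr (_ *m _ *m _).
by apply/matrixP => i j; rewrite !mxE.
Qed.

Lemma absz_det_unitmx n (A : 'M[int]_n) : A \in unitmx -> `|\det A|%N = 1%N.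
Proof. by rewrite unitmxE => /orP[] /eqP ->. Qed.

Section SmithForm.

Variables (n : nat) (L R : 'M[int]_n) (delta : 'I_n -> int) (b : 'cV[int]_n).
Hypotheses (uL : L \in unitmx) (uR : R \in unitmx).

Local Notation D := (diag_mx (\row_i delta i)).

Lemma absz_det_Smith : `|\det (L *m D *m R)|%N = (\prod_i `|delta i|)%N.
Proof.
rewrite !det_mulmx det_diag !abszM !absz_det_unitmx // mul1n muln1.
rewrite (big_morph absz abszM (erefl : `|1|%N = 1%N)).
by apply: eq_bigr => i _; rewrite mxE.
Qed.

Lemma det_Smith_eq0 : (\det (L *m D *m R) == 0) = [exists i, delta i == 0].
Proof.
rewrite -absz_eq0 absz_det_Smith prod_nat_seq_eq0.
apply/hasP/existsP => [[i _] | [i di0]]; first by rewrite /= absz_eq0; exists i.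
by exists i; rewrite ?mem_index_enum //= absz_eq0.
Qed.

Lemma simB_Smith x y :
  simB (L *m D *m R) b x y <-> simB D (invmx L *m b) (invmx L *m x) (invmx L *m y).
Proof.
rewrite -(@simB_unimodular _ L D R (invmx L *m b) (invmx L *m x) (invmx L *m y) uL uR).
by rewrite !mulKVmx.
Qed.

Lemma has_nclasses_Smith : (forall i, delta i != 0) ->
  exists k, has_nclasses (simB (L *m D *m R) b) k /\
    (2 * k = (\prod_i `|delta i|) + O2 (L *m D *m R) b)%N.
Proof.
move=> delta_neq0; pose beta := invmx L *m b.
pose p x := res_cV delta_neq0 (invmx L *m x); pose s := refl_cV delta_neq0 beta.
have p_onto u : exists x, p x = u.
  by have [x <-] := res_cV_onto delta_neq0 u; exists (L *m x); rewrite /p mulKmx.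
have simE x y : simB (L *m D *m R) b x y <-> p x = p y \/ p x = s (p y).
  by rewrite simB_Smith simB_diag res_cV_eq res_cV_refl_eq.
have [k [k_classes k_card]] :=
  has_nclasses_involution p_onto (refl_cVK delta_neq0 beta) simE.
exists k; split=> //; rewrite k_card card_res_cV card_refl_cV_fixed.
by rewrite -(mulKVmx uL b) O2_unimodular.
Qed.

Lemma has_infinitely_many_classes_Smith i0 : delta i0 = 0 ->
  has_infinitely_many_classes (simB (L *m D *m R) b).
Proof.
move=> delta_i0; apply: (has_infinitely_many_classes_invariant
  (phi := fun x => (invmx L *m x) i0 ord0) (beta := (invmx L *m b) i0 ord0)).
  move=> m; exists (L *m (m *: delta_mx i0 ord0)).
  by rewrite mulKmx // !mxE !eqxx mulr1.
move=> x y /simB_Smith /simB_diag [] /(_ i0); rewrite delta_i0 dvd0z => /eqP.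
  by move/subr0_eq; left.
by right.
Qed.

End SmithForm.

Unset Implicit Arguments.

Theorem lemma5p10 (n : nat) (B : 'M[int]_n) (b : 'cV[int]_n) :
  is_equivalence (simB B b) /\
  (\det B != 0 ->
     exists k : nat, has_nclasses (simB B b) k /\
       (2 * k = `|\det B|%N + O2 B b)%N) /\
  (\det B = 0 -> has_infinitely_many_classes (simB B b)).
Proof.
split; first exact: simB_equiv.
have [L [R [delta [uL uR ->]]]] := int_Smith_diag B.
rewrite absz_det_Smith //; split=> [/negbTE det_neq0 | /eqP].
  apply: has_nclasses_Smith => // i; apply: contraFN det_neq0 => delta_i0.
  by rewrite det_Smith_eq0 //; apply/existsP; exists i.
by rewrite det_Smith_eq0 // => /existsP [i0 /eqP /has_infinitely_many_classes_Smith]; apply.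
Qed.
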